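(* For every weak composition $a$, $\mathfrak{F}_a=\sum_{S\in\mathfrak{F}\mathrm{SSF}(a)}x^{\mathrm{wt}(S)}$.
   Context: Weak composition of length $n$: sequence of $n$ nonnegative integers; $\mathrm{flat}(a)$ deletes zero parts; $b\ge a$ means $b_1+\cdots+b_i\ge a_1+\cdots+a_i$ for all $i$. $\mathfrak{F}_a=\sum x^b$ over weak compositions $b$ of length $n$ with $b\ge a$ and $\mathrm{flat}(b)$ refining $\mathrm{flat}(a)$ (i.e. $\mathrm{flat}(a)$ is obtained by summing consecutive parts of $\mathrm{flat}(b)$). $D(a)$: $a_i$ left-justified boxes in row $i$, row 1 lowest. For a filling $S$, $\mathrm{wt}(S)_i$ is the number of entries $i$. Triples (rows $r<s$): Type A: $\gamma=(r,c),\alpha=(r,c+1),\beta=(s,c+1)$ with $a_r\ge a_s$; Type B: $\gamma=(s,c),\alpha=(s,c+1),\beta=(r,c)$ with $a_s>a_r$; inversion triple: $\beta>\gamma\ge\alpha$ or $\gamma\ge\alpha>\beta$. A semi-skyline filling of $D(a)$: positive integer entries, rows weakly decreasing left to right, distinct entries in each column, all triples inversion triples. $\mathfrak{F}\mathrm{SSF}(a)$: semi-skyline fillings of $D(a)$ in which each first-column entry is at most its row index and, whenever box $B$ is in a higher row than box $B'$, the entry of $B$ is strictly larger than that of $B'$. *)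

From mathcomp Require Import all_boot all_order all_algebra.
From mathcomp Require Import ssrcomplements freeg mpoly.
From mathcomp Require Import boolp.
Set Implicit Arguments.
Unset Strict Implicit.
Unset Printing Implicit Defensive.
Import GRing.Theory.

(* Weak compositions of length n are n-tuples of nat (viewed as seq nat).
   Row/column indices below are 0-indexed: row r here is row r+1 of the paper. *)

Definition flat (s : seq nat) : seq nat := filter (fun x => x != 0%N) s.

Definition dom_ge (b a : seq nat) : Prop :=
  forall i : nat, (i <= size a)%N -> (sumn (take i a) <= sumn (take i b))%N.

(* c refines d : d is obtained by summing consecutive (nonempty) blocks of
   parts of c. *)
Definition refines (c d : seq nat) : Prop :=
  exists r : seq nat,
    [/\ all (fun k => 0 < k)%N r, sumn r = size c & map sumn (reshape r c) = d].

(* The polynomial F_a = sum of x^b over weak compositions b of length n with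
   b >= a and flat(b) refining flat(a).  Such b have |b| = |a| (dominance
   gives |b| >= |a|, refinement gives |b| = |a|), so summing over the finite
   type of monomials of degree < |a|+1 loses no term. *)
Definition slide_cond n (a : n.-tuple nat) (b : 'X_{1..n}) : bool :=
  `[< dom_ge (val b) a /\ refines (flat (val b)) (flat a) >].

Definition slide_poly n (a : n.-tuple nat) : {mpoly int[n]} :=
  \sum_(b : 'X_{1..n < (sumn a).+1} | slide_cond a b) 'X_[b].

(* A filling is a list of rows; row r (0-indexed, bottom row first) lists the
   entries of its a_r boxes from left to right. *)
Definition filling := seq (seq nat).

Definition entry (S : filling) (r c : nat) : nat := nth 0%N (nth [::] S r) c.

Definition has_shape n (a : n.-tuple nat) (S : filling) : Prop :=
  size S = n /\ forall r, (r < n)%N -> size (nth [::] S r) = nth 0%N a r.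

Definition inD (a : seq nat) (r c : nat) : bool := (r < size a)%N && (c < nth 0%N a r)%N.

Definition wt n (S : filling) : 'X_{1..n} :=
  [multinom count_mem i.+1 (flatten S) | i < n].

Definition inversion_triple (g al be : nat) : Prop :=
  (g < be /\ al <= g)%N \/ (be < al /\ al <= g)%N.

(* Triples: rows r < s, all three boxes in D(a).
   Type A: gamma=(r,c), alpha=(r,c+1), beta=(s,c+1), with a_r >= a_s.
   Type B: gamma=(s,c), alpha=(s,c+1), beta=(r,c), with a_s > a_r. *)
Definition triples_inversion (a : seq nat) (S : filling) : Prop :=
  forall r s c, (r < s)%N ->
    ((nth 0%N a s <= nth 0%N a r)%N ->
       inD a r c -> inD a r c.+1 -> inD a s c.+1 ->
       inversion_triple (entry S r c) (entry S r c.+1) (entry S s c.+1)) /\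
    ((nth 0%N a r < nth 0%N a s)%N ->
       inD a s c -> inD a s c.+1 -> inD a r c ->
       inversion_triple (entry S s c) (entry S s c.+1) (entry S r c)).

Definition semi_skyline n (a : n.-tuple nat) (S : filling) : Prop :=
  [/\ has_shape a S,
      (forall r c, inD a r c -> 0 < entry S r c)%N,
      (forall r c, inD a r c.+1 -> entry S r c.+1 <= entry S r c)%N,
      (forall r s c, inD a r c -> inD a s c -> r <> s -> entry S r c <> entry S s c)
    & triples_inversion a S].

Definition FSSF n (a : n.-tuple nat) (S : filling) : Prop :=
  [/\ semi_skyline a S,
      (forall r, inD a r 0 -> entry S r 0 <= r.+1)%N
    &
      (forall r c s d, inD a r c -> inD a s d -> (s < r)%N -> entry S s d < entry S r c)%N].

From mathcomp Require Import all_boot all_order all_algebra.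
From mathcomp Require Import ssrcomplements freeg mpoly.
From mathcomp Require Import boolp zify.
Set Implicit Arguments.
Unset Strict Implicit.
Unset Printing Implicit Defensive.

(* A monomial x^b of degree |a| determines the weakly increasing word
   w(b) = 1^(b_1) 2^(b_2) ... n^(b_n); filling the rows of D(a) from the bottom
   up, each row from right to left, with the letters of w(b) gives a filling
   of weight b.  Conversely, since rows decrease weakly and higher rows hold
   strictly larger entries, the reading word of any S in FSSF(a) (rows bottom
   to top, each right to left) is weakly increasing, hence equal to w(wt S).
   For the filling of w(b) the first-column bound amounts to the dominance
   b >= a, and strict increase between rows amounts to every partial sum of a
   being a partial sum of b, i.e. to flat(b) refining flat(a); column
   distinctness and the triple conditions are then automatic, as entries
   increase strictly from row to row and weakly decrease along rows. *)

Definition psum (s : seq nat) (k : nat) : nat := sumn (take k s).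

Definition is_psum (s : seq nat) (x : nat) : Prop := exists k, x = psum s k.

Lemma psumS s k : k < size s -> psum s k.+1 = psum s k + nth 0 s k.
Proof. by move=> ks; rewrite /psum (take_nth 0) // sumn_rcons. Qed.

Lemma leq_psum s j k : j <= k -> psum s j <= psum s k.
Proof. by move=> jk; rewrite /psum -(subnKC jk) takeD sumn_cat leq_addr. Qed.

Lemma psum_leq_sumn s k : psum s k <= sumn s.
Proof. by rewrite /psum -{2}(cat_take_drop k s) sumn_cat leq_addr. Qed.

Lemma psum_oversize s k : size s <= k -> psum s k = sumn s.
Proof. by move=> ks; rewrite /psum take_oversize. Qed.

Lemma ltn_psum s j k : all (fun x => 0 < x) s -> j < k <= size s ->
  psum s j < psum s k.
Proof.
move=> /all_nthP s_gt0 /andP[jk ks].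
have js : j < size s by lia.
rewrite /psum -(subnKC (ltnW jk)) takeD sumn_cat -[X in X < _]addn0 ltn_add2l.
rewrite (drop_nth 0 js); case E: (k - j) => [|m] /=; first by lia.
by have := s_gt0 0 j js; lia.
Qed.

Lemma is_psum0 s : is_psum s 0.
Proof. by exists 0; rewrite /psum take0. Qed.

Lemma is_psum_cons y s x :
  is_psum (y :: s) x <-> x = 0 \/ exists2 z, is_psum s z & x = y + z.
Proof.
split=> [[[|k] ->]|[->|[z [k ->] ->]]]; last by exists k.+1.
- by left; rewrite /psum take0.
- by right; exists (psum s k); first exists k.
- exact: is_psum0.
Qed.

Lemma is_psum_size s x : is_psum s x -> exists2 k, k <= size s & x = psum s k.
Proof.
case=> k ->; exists (minn k (size s)); first exact: geq_minr.
by case: leqP => // /ltnW ks; rewrite !psum_oversize.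
Qed.

Lemma is_psum_drop s k y : all (fun x => 0 < x) s -> k <= size s ->
  is_psum s (psum s k + y) -> is_psum (drop k s) y.
Proof.
move=> s_gt0 ks [j Ej].
have kj : k <= j.
  by rewrite leqNgt; apply/negP => jk; have := ltn_psum s_gt0 (introT andP (conj jk ks)); lia.
by exists (j - k); move: Ej; rewrite /psum -{1}(subnKC kj) takeD sumn_cat; lia.
Qed.

Lemma psum_bracket s i : i < sumn s ->
  exists2 r, r < size s & psum s r <= i < psum s r.+1.
Proof.
rewrite -(psum_oversize (leqnn (size s))).
elim: (size s) => [|k IH] ik; first by rewrite /psum take0 in ik.
case: (ltnP i (psum s k)) => [/IH[r rk bounds]|ki]; first by exists r; first lia.
exists k; last by rewrite ki ik.
by rewrite ltnNge; apply/negP => sk; move: ik ki; rewrite !psum_oversize //; lia.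
Qed.

Lemma psum_reshape r s j : psum (map sumn (reshape r s)) j = psum s (psum r j).
Proof.
elim: r s j => [|k r IH] s [|j]; rewrite /psum ?take0 //=.
by have := IH (drop k s) j; rewrite /psum => ->; rewrite takeD sumn_cat.
Qed.

Lemma sumn_flat s : sumn (flat s) = sumn s.
Proof. by rewrite /flat; elim: s => //= x s IH; case: eqP => [->|] //=; rewrite IH. Qed.

Lemma flat_gt0 s : all (fun x => 0 < x) (flat s).
Proof. by rewrite all_filter; apply/allP => x _ /=; rewrite lt0n implybb. Qed.

Lemma is_psum_flat s x : is_psum (flat s) x <-> is_psum s x.
Proof.
elim: s x => [|y s IH] x //; rewrite /flat /= -/(flat s).
case: eqP => [->|_].
  split=> [/IH psum_x|/is_psum_cons[->|[z /IH psum_z ->//]]]; last exact: is_psum0.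
  by apply/is_psum_cons; right; exists x.
by split=> /is_psum_cons[->|[z /IH psum_z ->]]; apply/is_psum_cons;
  [left | right; exists z | left | right; exists z].
Qed.

Lemma refinesP c d : all (fun x => 0 < x) c -> all (fun x => 0 < x) d ->
  refines c d <-> sumn c = sumn d /\ (forall x, is_psum d x -> is_psum c x).
Proof.
move=> c_gt0 d_gt0; split.
  case=> r [_ size_c <-]; split; last by move=> _ [j ->]; rewrite psum_reshape; eexists.
  have := psum_reshape r c (size r).
  by rewrite !psum_oversize ?size_map ?size_reshape ?size_c.
elim: d c c_gt0 d_gt0 => [|x d IH] c c_gt0 /= d_gt0 [sum_cd psum_dc].
  by exists [::]; split=> //=; case: c {psum_dc} c_gt0 sum_cd => //= y c /andP[]; lia.
move: d_gt0 => /andP[x_gt0 d_gt0].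
have psum_x : is_psum (x :: d) x by exists 1; rewrite /psum /= take0 addn0.
have [k kc Ex] := is_psum_size (psum_dc x psum_x).
have k_gt0 : 0 < k by case: k Ex {kc} => [|k] //; rewrite /psum take0 /=; lia.
have sum_drop : sumn (drop k c) = sumn d.
  by move: sum_cd; rewrite -{1}(cat_take_drop k c) sumn_cat -/(psum c k) -Ex; lia.
have psum_drop y : is_psum d y -> is_psum (drop k c) y.
  move=> [j ->]; apply: is_psum_drop => //; rewrite -Ex.
  by apply: psum_dc; exists j.+1.
have drop_gt0 : all (fun x => 0 < x) (drop k c).
  by apply/allP => y /mem_drop /(allP c_gt0).
have [r [r_gt0 size_r Er]] := IH _ drop_gt0 d_gt0 (conj sum_drop psum_drop).
by exists (k :: r); rewrite /= k_gt0 r_gt0 size_r size_drop -/(psum c k) -Ex Er subnKC.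
Qed.

Lemma slide_condP n (a : n.-tuple nat) (b : 'X_{1..n}) :
  slide_cond a b <->
  [/\ dom_ge (val b) a, sumn (val b) = sumn a & forall x, is_psum a x -> is_psum (val b) x].
Proof.
have flatP s t : refines (flat s) (flat t) <->
    sumn s = sumn t /\ (forall x, is_psum t x -> is_psum s x).
  rewrite (refinesP (flat_gt0 _) (flat_gt0 _)) !sumn_flat.
  by split=> -[-> psum_ts]; split=> // x /is_psum_flat/psum_ts/is_psum_flat.
by split=> [/asboolP[dom /flatP[]]|[dom sum psums]] //; apply/asboolP; split=> //; apply/flatP.
Qed.

Fixpoint word (m : nat) (b : seq nat) : seq nat :=
  if b is x :: b' then nseq x m ++ word m.+1 b' else [::].

Lemma size_word m b : size (word m b) = sumn b.
Proof. by elim: b m => //= x b IH m; rewrite size_cat size_nseq IH. Qed.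

Lemma mem_word_geq m b y : y \in word m b -> m <= y.
Proof.
elim: b m => //= x b IH m; rewrite mem_cat => /orP[/nseqP[-> _] //|].
by move/IH; lia.
Qed.

Lemma count_word m b y :
  count_mem y (word m b) = if m <= y then nth 0 b (y - m) else 0.
Proof.
elim: b m => [|x b IH] m /=; first by case: ifP; rewrite ?nth_nil.
rewrite count_cat IH count_nseq /=.
case: (ltngtP m y) => [my|//|<-]; last by rewrite subnn mul1n addn0.
by have -> : y - m = (y - m.+1).+1 by lia.
Qed.

Lemma nth_word_leq m b i k : i < sumn b ->
  (nth 0 (word m.+1 b) i <= m + k) = (i < psum b k).
Proof.
elim: b m i k => [|x b IH] m i k //= ib.
rewrite nth_cat size_nseq /psum.
case: ltnP => xi; first by rewrite nth_nseq xi; case: k => [|k] /=; lia.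
case: k => [|k] /=; last by rewrite addnS -addSn -/(psum b k) IH; lia.
rewrite addn0; apply/negbTE; rewrite -ltnNge.
have ib' : i - x < size (word m.+2 b) by rewrite size_word; lia.
exact/ltnW/(mem_word_geq (mem_nth 0 ib')).
Qed.

Lemma nth_word1_leq b i k : i < sumn b -> (nth 0 (word 1 b) i <= k) = (i < psum b k).
Proof. by move=> ib; rewrite -(nth_word_leq 0 k ib). Qed.

Lemma nth_word1_gt0 b i : i < sumn b -> 0 < nth 0 (word 1 b) i.
Proof. by move=> ib; rewrite lt0n -leqn0 nth_word1_leq // /psum take0. Qed.

Lemma nth_word1_mono b i j : i <= j -> j < sumn b ->
  nth 0 (word 1 b) i <= nth 0 (word 1 b) j.
Proof.
move=> ij jb; rewrite nth_word1_leq; last by lia.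
by have := leqnn (nth 0 (word 1 b) j); rewrite nth_word1_leq //; lia.
Qed.

Lemma sorted_word1 b : sorted leq (word 1 b).
Proof.
rewrite sorted_pairwise; last exact: leq_trans.
apply/(pairwiseP 0) => i j; rewrite !inE size_word => ib jb ij.
exact: nth_word1_mono (ltnW ij) jb.
Qed.

Definition fill (a T : seq nat) : filling := map rev (reshape a T).

Definition reading (S : filling) : seq nat := flatten (map rev S).

Lemma count_reading S x : count_mem x (reading S) = count_mem x (flatten S).
Proof.
by rewrite !count_flatten -map_comp; congr sumn; apply: eq_map => s /=; rewrite count_rev.
Qed.

Lemma fill_index_lt (a : seq nat) r c : inD a r c ->
  psum a r + (nth 0 a r - c.+1) < psum a r.+1.
Proof. by case/andP=> ra ca; rewrite psumS //; lia. Qed.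

Lemma entry_fill (a T : seq nat) r c : inD a r c -> sumn a <= size T ->
  entry (fill a T) r c = nth 0 T (psum a r + (nth 0 a r - c.+1)).
Proof.
move=> rc aT; have /andP[ra ca] := rc.
have := psumS ra; have := psum_leq_sumn a r.+1 => ??.
rewrite /entry /fill (nth_map [::]) ?size_reshape // nth_reshape -/(psum a r).
have size_row : size (take (nth 0 a r) (drop (psum a r) T)) = nth 0 a r.
  by rewrite size_takel // size_drop; lia.
by rewrite nth_rev size_row // nth_take; [rewrite nth_drop | lia].
Qed.

Lemma has_shape_fill n (a : n.-tuple nat) T : size T = sumn a -> has_shape a (fill a T).
Proof.
move=> size_T; split; first by rewrite size_map size_reshape size_tuple.
move=> r rn; have ra : r < size a by rewrite size_tuple.
have := psumS ra; have := psum_leq_sumn a r.+1 => ??.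
rewrite (nth_map [::]) ?size_reshape // size_rev nth_reshape -/(psum a r).
by rewrite size_takel // size_drop; lia.
Qed.

Lemma fill_cover (a T : seq nat) i : size T = sumn a -> i < sumn a ->
  exists r c, [/\ inD a r c, nth 0 T i = entry (fill a T) r c,
                  psum a r <= i < psum a r.+1 & i = psum a r + (nth 0 a r - c.+1)].
Proof.
move=> size_T /psum_bracket[r ra /andP[lo hi]].
have := psumS ra => ?.
exists r, (psum a r.+1 - i.+1).
have rc : inD a r (psum a r.+1 - i.+1) by rewrite /inD ra; lia.
have Ei : i = psum a r + (nth 0 a r - (psum a r.+1 - i.+1).+1) by lia.
by split; rewrite ?lo ?hi // entry_fill ?size_T // -Ei.
Qed.

Lemma leq_entry_row (a : seq nat) S r c c' :
  (forall r c, inD a r c.+1 -> entry S r c.+1 <= entry S r c) ->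
  inD a r c' -> c <= c' -> entry S r c' <= entry S r c.
Proof.
move=> row_dec; elim: c' => [|c' IH] rc' cc'; first by case: c cc'.
have [->//|ne] := eqVneq c c'.+1.
have rc : inD a r c' by move: rc'; rewrite /inD => /andP[-> /ltnW].
by apply: leq_trans (row_dec _ _ rc') (IH rc _); lia.
Qed.

Lemma FSSF_of_row_strict n (a : n.-tuple nat) S :
  has_shape a S ->
  (forall r c, inD a r c -> 0 < entry S r c) ->
  (forall r c, inD a r c.+1 -> entry S r c.+1 <= entry S r c) ->
  (forall r, inD a r 0 -> entry S r 0 <= r.+1) ->
  (forall r c s d, inD a r c -> inD a s d -> s < r -> entry S s d < entry S r c) ->
  FSSF a S.
Proof.
move=> shape pos row_dec first_col row_strict; split=> //; split=> //.
  move=> r s c rc sc; case: (ltngtP r s) => // [rs|sr] _.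
    by have := row_strict _ _ _ _ sc rc rs; lia.
  by have := row_strict _ _ _ _ rc sc sr; lia.
move=> r s c rs; split=> _ ? ? ?.
  by left; split; [exact: row_strict | exact: row_dec].
by right; split; [exact: row_strict | exact: row_dec].
Qed.

Section FillWord.

Variables (n : nat) (a : n.-tuple nat) (b : seq nat).
Hypothesis sum_ba : sumn b = sumn a.

Let size_w : size (word 1 b) = sumn a.
Proof. by rewrite size_word. Qed.

Lemma fill_word_FSSF :
  dom_ge b a -> (forall x, is_psum a x -> is_psum b x) -> FSSF a (fill a (word 1 b)).
Proof.
move=> dom_ba psum_ab.
have entryE r c : inD a r c ->
    entry (fill a (word 1 b)) r c = nth 0 (word 1 b) (psum a r + (nth 0 a r - c.+1))
    /\ psum a r + (nth 0 a r - c.+1) < sumn b.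
  move=> rc; rewrite entry_fill ?size_w //; split=> //.
  by have := fill_index_lt rc; have := psum_leq_sumn a r.+1; lia.
apply: FSSF_of_row_strict.
- exact: has_shape_fill.
- by move=> r c /entryE[-> ?]; apply: nth_word1_gt0.
- move=> r c rc1; have rc : inD a r c by case/andP: (rc1) => ra ca; rewrite /inD ra; lia.
  have [-> i1] := entryE _ _ rc1; have [-> i2] := entryE _ _ rc.
  by apply: nth_word1_mono => //; move: rc1 => /andP[_]; lia.
- move=> r r0; have [-> i] := entryE _ _ r0; move: r0 => /andP[ra ca].
  have dom_r : psum a r.+1 <= psum b r.+1 := dom_ba r.+1 ra.
  by rewrite nth_word1_leq //; move: dom_r; rewrite psumS //; lia.
- move=> r c s d rc sd sr.
  have [-> i1] := entryE _ _ rc; have [-> i2] := entryE _ _ sd.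
  have [k psum_rk] := psum_ab (psum a r) (ex_intro _ r erefl).
  have := leq_psum a sr; have := fill_index_lt sd => ??.
  have below : nth 0 (word 1 b) (psum a s + (nth 0 a s - d.+1)) <= k.
    by rewrite nth_word1_leq // -psum_rk; lia.
  have above : k < nth 0 (word 1 b) (psum a r + (nth 0 a r - c.+1)).
    by rewrite ltnNge nth_word1_leq // -psum_rk; lia.
  exact: leq_ltn_trans below above.
Qed.

Lemma FSSF_fill_word_dom_ge : FSSF a (fill a (word 1 b)) -> dom_ge b a.
Proof.
move=> [[_ _ row_dec _ _] first_col _] i ia; change (psum a i <= psum b i).
have [->//|psum_gt0] := posnP (psum a i).
have ja : (psum a i).-1 < sumn a by have := psum_leq_sumn a i; lia.
have [r [c [rc Ej /andP[lo hi] _]]] := fill_cover size_w ja.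
have ri : r < i by rewrite ltnNge; apply/negP => /(leq_psum a); lia.
have r0 : inD a r 0 by case/andP: (rc) => ra ca; rewrite /inD ra; lia.
have : nth 0 (word 1 b) (psum a i).-1 <= i.
  by rewrite Ej; have := leq_entry_row row_dec rc (leq0n c); have := first_col r r0; lia.
by rewrite nth_word1_leq ?sum_ba //; lia.
Qed.

Lemma FSSF_fill_word_psum :
  FSSF a (fill a (word 1 b)) -> forall x, is_psum a x -> is_psum b x.
Proof.
move=> [_ _ row_strict] _ [r ->].
have [->|psum_gt0] := posnP (psum a r); first exact: is_psum0.
have [sum_le|ra] := leqP (sumn a) (psum a r).
  exists (size b); rewrite [psum b _]psum_oversize // sum_ba.
  by have := psum_leq_sumn a r; lia.
have ja : (psum a r).-1 < sumn a by lia.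
have [s1 [c1 [sc1 E1 /andP[lo1 hi1] _]]] := fill_cover size_w ja.
have [s2 [c2 [sc2 E2 /andP[lo2 hi2] _]]] := fill_cover size_w ra.
have s1r : s1 < r by rewrite ltnNge; apply/negP => /(leq_psum a); lia.
have rs2 : r <= s2 by rewrite leqNgt; apply/negP => /(leq_psum a); lia.
have := row_strict _ _ _ _ sc2 sc1 (leq_trans s1r rs2); rewrite -E1 -E2 => lt_next.
exists (nth 0 (word 1 b) (psum a r).-1).
have := leqnn (nth 0 (word 1 b) (psum a r).-1); rewrite nth_word1_leq ?sum_ba //.
have := lt_next; rewrite ltnNge nth_word1_leq ?sum_ba //; lia.
Qed.

End FillWord.

Lemma slide_cond_FSSF n (a : n.-tuple nat) (b : 'X_{1..n}) :
  slide_cond a b <-> sumn (val b) = sumn a /\ FSSF a (fill a (word 1 (val b))).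
Proof.
split=> [/slide_condP[dom sum psums]|[sum FS]]; first by split=> //; apply: fill_word_FSSF.
apply/slide_condP; split=> //; [exact: FSSF_fill_word_dom_ge | exact: FSSF_fill_word_psum].
Qed.

Lemma wt_fill_word n (a : n.-tuple nat) (b : 'X_{1..n}) : sumn (val b) = sumn a ->
  wt n (fill a (word 1 (val b))) = b.
Proof.
move=> sum_ba; apply/mnmP => i.
rewrite mnmE (count_reading (reshape _ _)) reshapeKr ?size_word ?sum_ba //.
by rewrite count_word subn1 (mnm_nth 0).
Qed.

Lemma sorted_FSSF_fill n (a : n.-tuple nat) T :
  size T = sumn a -> FSSF a (fill a T) -> sorted leq T.
Proof.
move=> size_T [[_ _ row_dec _ _] _ row_strict].
rewrite sorted_pairwise; last exact: leq_trans.
apply/(pairwiseP 0) => i j; rewrite !inE size_T => ia ja ij.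
have [r1 [c1 [rc1 -> /andP[lo1 hi1] E1]]] := fill_cover size_T ia.
have [r2 [c2 [rc2 -> /andP[lo2 hi2] E2]]] := fill_cover size_T ja.
case: (ltngtP r1 r2) => [r12|r21|r12].
- exact/ltnW/(row_strict _ _ _ _ rc2 rc1 r12).
- by have := leq_psum a r21; lia.
- subst r2; apply: (leq_entry_row row_dec rc1).
  by move: rc1 rc2 => /andP[_ ?] /andP[_ ?]; lia.
Qed.

Lemma FSSF_fill_range n (a : n.-tuple nat) T :
  size T = sumn a -> FSSF a (fill a T) -> forall x, x \in T -> 0 < x <= n.
Proof.
move=> size_T [[_ pos row_dec _ _] first_col _] x xT.
have xa : index x T < sumn a by rewrite -size_T index_mem.
have [r [c [rc E _ _]]] := fill_cover size_T xa.
rewrite nth_index // in E; rewrite E pos //=.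
have r0 : inD a r 0 by case/andP: (rc) => ra ca; rewrite /inD ra; lia.
have := leq_entry_row row_dec rc (leq0n c); have := first_col r r0.
by move: rc => /andP[]; rewrite size_tuple; lia.
Qed.

Section Reading.

Variables (n : nat) (a : n.-tuple nat) (S : filling).
Hypothesis shape_S : has_shape a S.

Let shape_reading : shape (map rev S) = a.
Proof.
have [size_S size_row] := shape_S.
apply: (@eq_from_nth _ 0); first by rewrite /shape !size_map size_S size_tuple.
move=> r; rewrite /shape !size_map => rS.
by rewrite (nth_map [::]) ?size_map // (nth_map [::]) // size_rev size_row -?size_S.
Qed.

Lemma fill_reading : fill a (reading S) = S.
Proof. by rewrite /fill /reading -{1}shape_reading flattenK (mapK revK). Qed.

Lemma size_reading : size (reading S) = sumn a.
Proof. by rewrite size_flatten shape_reading. Qed.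

End Reading.

Lemma reading_FSSF n (a : n.-tuple nat) S : FSSF a S -> reading S = word 1 (val (wt n S)).
Proof.
move=> FS; have [[shape_S _ _ _ _] _ _] := FS.
have size_T := size_reading shape_S.
have FT : FSSF a (fill a (reading S)) by rewrite fill_reading.
have range := FSSF_fill_range size_T FT.
apply: (sorted_eq leq_trans anti_leq); [exact: sorted_FSSF_fill FT | exact: sorted_word1 |].
apply/allP => x _; apply/eqP; rewrite count_word.
have [x0|x_gt0] := posnP x.
  by rewrite x0 /=; apply/count_memPn/negP => /range; lia.
have [xn|nx] := leqP x n; last first.
  by rewrite nth_default ?size_tuple; [apply/count_memPn/negP => /range | ]; lia.
have x1n : x - 1 < n by lia.
rewrite -[x - 1]/(nat_of_ord (Ordinal x1n)) -mnm_nth mnmE /= subn1 prednK //.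
by rewrite count_reading.
Qed.

Theorem proposition2p9 (n : nat) (a : n.-tuple nat) :
  exists L : seq filling,
    [/\ uniq L,
        (forall S : filling, S \in L <-> FSSF a S)
      & slide_poly a = (\sum_(S <- L) 'X_[wt n S])%R].
Proof.
pose B := enum [pred b : 'X_{1..n < (sumn a).+1} | slide_cond a b].
pose F (b : 'X_{1..n < (sumn a).+1}) := fill a (word 1 (val (bmnm b))).
have FSSF_B b : b \in B <-> sumn (val (bmnm b)) = sumn a /\ FSSF a (F b).
  by rewrite mem_enum inE; split=> /slide_cond_FSSF.
have wtF b : b \in B -> wt n (F b) = bmnm b by move=> /FSSF_B[/wt_fill_word].
exists (map F B); split.
- rewrite map_inj_in_uniq ?enum_uniq // => b1 b2 /wtF wt1 /wtF wt2 /(congr1 (wt n)).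
  by rewrite wt1 wt2 => /val_inj.
- move=> S; split=> [/mapP[b /FSSF_B[_ FS] ->] //|FS].
  have read_S := reading_FSSF FS.
  have shape_S : has_shape a S by case: FS => -[].
  have sum_wt : sumn (val (wt n S)) = sumn a.
    by rewrite -(size_word 1) -read_S (size_reading shape_S).
  have deg_wt : mdeg (wt n S) < (sumn a).+1 by rewrite /mdeg -sumnE sum_wt.
  have F_wt : F (BMultinom deg_wt) = S.
    by rewrite /F /= -read_S (fill_reading shape_S).
  by apply/mapP; exists (BMultinom deg_wt); rewrite // FSSF_B F_wt.
- by rewrite big_map /slide_poly -big_enum; apply: eq_big_seq => b /wtF ->.
Qed.
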